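(* Let $A\in\mathbb{R}^{n\times n}$, let $W\in\mathbb{R}^{n\times n}$ be symmetric positive definite, let $C=\mathrm{diag}(C_{11},\dots,C_{nn})$ be diagonal positive definite and $V=\mathrm{diag}(\sigma_1^2,\dots,\sigma_n^2)$ with $\sigma_j>0$. Let $\Sigma$ be the unique positive semidefinite solution of $\Sigma=A\Sigma A^T-A\Sigma C^T(C\Sigma C^T+V)^{-1}C\Sigma A^T+W$ (the steady-state a priori Kalman filter error covariance). Then $$\ln\det\Sigma\le\mathrm{tr}(A^TA)\frac{\sigma_l^2}{C_l^2}+\mathrm{tr}\,W.$$
   Context: The index $l$ is defined by $l=\arg\min_{1\le j\le n}C_{jj}^2/\sigma_j^2$, and $C_l:=C_{ll}$. *)

From HB Require Import structures.
From mathcomp Require Import all_boot all_order all_algebra.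
From mathcomp Require Import all_classical all_reals all_analysis.
Set Implicit Arguments. Unset Strict Implicit. Unset Printing Implicit Defensive.
Import Order.TTheory GRing.Theory Num.Theory.
Local Open Scope ring_scope.

Definition psd_mx (R : realType) (n : nat) (M : 'M[R]_n) : Prop :=
  M^T = M /\ forall v : 'cV[R]_n, 0 <= (v^T *m M *m v) 0 0.

Definition pd_mx (R : realType) (n : nat) (M : 'M[R]_n) : Prop :=
  M^T = M /\ forall v : 'cV[R]_n, v != 0 -> 0 < (v^T *m M *m v) 0 0.

Definition dare (R : realType) (n : nat) (A W C V S : 'M[R]_n) : Prop :=
  S = A *m S *m A^T
      - A *m S *m C^T *m invmx (C *m S *m C^T + V) *m C *m S *m A^T + W.

(* Since W is positive definite, so is Sigma, and ln det Sigma <= tr Sigma - n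
   (AM-GM for the eigenvalues; here by induction on Schur complements, using
   ln x <= x - 1).  The Riccati equation reads Sigma = A P A^T + W, where
   P = Sigma - K C Sigma is the a posteriori covariance for the Kalman gain K.
   Completing the square shows that P minimises the Joseph form
   (1 - X C) Sigma (1 - X C)^T + X V X^T over all gains X; the gain X = C^-1
   gives V C^-2 = diag (sigma_j^2 / C_jj^2) <= (sigma_l^2 / C_l^2) 1 by the
   choice of l.  Taking traces, tr Sigma <= (sigma_l^2 / C_l^2) tr (A A^T) + tr W. *)

From HB Require Import structures.
From mathcomp Require Import all_boot all_order all_algebra.
From mathcomp Require Import all_classical all_reals all_analysis.
From mathcomp Require Import ring lra.

Set Implicit Arguments.
Unset Strict Implicit.
Unset Printing Implicit Defensive.

Import Order.TTheory GRing.Theory Num.Theory.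
Local Open Scope ring_scope.

Definition qform {R : comPzRingType} {n} (M : 'M[R]_n) (v : 'cV[R]_n) : R :=
  (v^T *m M *m v) 0 0.

Section QuadraticForm.
Variables (R : comPzRingType) (n : nat).
Implicit Types (M N : 'M[R]_n) (v : 'cV[R]_n).

Lemma qformD M N v : qform (M + N) v = qform M v + qform N v.
Proof. by rewrite /qform mulmxDr mulmxDl mxE. Qed.

Lemma qformB M N v : qform (M - N) v = qform M v - qform N v.
Proof. by rewrite /qform mulmxBr mulmxBl !mxE. Qed.

Lemma qform_congr m (X : 'M[R]_(n, m)) (M : 'M[R]_m) v :
  qform (X *m M *m X^T) v = qform M (X^T *m v).
Proof. by rewrite /qform trmx_mul trmxK !mulmxA. Qed.

Lemma qform_diag (d : 'rV[R]_n) v : qform (diag_mx d) v = \sum_j d 0 j * v j 0 ^+ 2.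
Proof.
rewrite /qform mul_mx_diag !mxE; apply: eq_bigr => j _.
by rewrite !mxE; ring.
Qed.

Lemma qform_delta M i : qform M (delta_mx i 0) = M i i.
Proof. by rewrite /qform trmx_delta -rowE -colE !mxE. Qed.

End QuadraticForm.

Section QuadraticFormOrder.
Variables (R : realDomainType) (n : nat).
Implicit Types (M N : 'M[R]_n) (v : 'cV[R]_n).

Lemma mxtrace_congr_ge0 m (B : 'M[R]_(m, n)) M :
  (forall v, 0 <= qform M v) -> 0 <= \tr (B *m M *m B^T).
Proof.
move=> M_ge0; apply: sumr_ge0 => i _.
by rewrite -qform_delta qform_congr.
Qed.

Lemma mxtrace_congr_le m (B : 'M[R]_(m, n)) M N :
  (forall v, qform M v <= qform N v) ->
  \tr (B *m M *m B^T) <= \tr (B *m N *m B^T).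
Proof.
move=> MN; rewrite -subr_ge0 -raddfB -mulmxBl -mulmxBr.
by apply: mxtrace_congr_ge0 => v; rewrite qformB subr_ge0.
Qed.

Lemma mxtrace_mul_tr_ge0 m (B : 'M[R]_(m, n)) : 0 <= \tr (B *m B^T).
Proof.
rewrite -[B in B *m _]mulmx1; apply: mxtrace_congr_ge0 => v.
by rewrite -diag_const_mx qform_diag; apply: sumr_ge0 => j _; rewrite mxE mul1r sqr_ge0.
Qed.

Lemma qform_diag_le (d e : 'rV[R]_n) v :
  (forall j, d 0 j <= e 0 j) -> qform (diag_mx d) v <= qform (diag_mx e) v.
Proof.
by move=> de; rewrite !qform_diag; apply: ler_sum => j _; rewrite ler_wpM2r ?sqr_ge0.
Qed.

Lemma qform_diag_gt0 (d : 'rV[R]_n) v :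
  (forall j, 0 < d 0 j) -> v != 0 -> 0 < qform (diag_mx d) v.
Proof.
move=> d_gt0 v_neq0.
have [j vj_neq0] : exists j, v j 0 != 0.
  apply/existsP; apply: contraR v_neq0 => /existsPn v0; apply/eqP/matrixP => i k.
  by rewrite ord1 mxE; apply/eqP/negPn/v0.
rewrite qform_diag (bigD1 j) //= ltr_pwDl //.
  by rewrite mulr_gt0 ?d_gt0 ?exprn_even_gt0 ?vj_neq0 ?orbT.
by apply: sumr_ge0 => i _; rewrite mulr_ge0 ?sqr_ge0 // ltW.
Qed.

End QuadraticFormOrder.

Section SchurComplement.
Variables (R : fieldType) (n : nat) (S : 'M[R]_(1 + n)).
Local Notation a := (ulsubmx S 0 0).

Definition schur_compl : 'M[R]_n :=
  drsubmx S - a^-1 *: (dlsubmx S *m ursubmx S).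

Definition schur_basis : 'M[R]_(1 + n, n) := col_mx (- a^-1 *: ursubmx S) 1%:M.

Hypothesis a_neq0 : a != 0.

Let S_block : S = block_mx a%:M (ursubmx S) (dlsubmx S) (drsubmx S).
Proof. by rewrite -mx11_scalar submxK. Qed.

Lemma mulmx_schur_basis : S *m schur_basis = col_mx 0 schur_compl.
Proof.
rewrite {1}S_block mul_block_col !mulmx1 mul_scalar_mx scalerA mulrN mulfV //.
by rewrite scaleN1r addNr /schur_compl scalemxAr scaleNr addrC mulmxN.
Qed.

Lemma schur_compl_congr : schur_compl = schur_basis^T *m S *m schur_basis.
Proof.
by rewrite -mulmxA mulmx_schur_basis tr_col_mx trmx1 mul_row_col mulmx0 mul1mx add0r.
Qed.

Lemma det_schur_compl : \det S = a * \det schur_compl.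
Proof.
have S_factor : S = block_mx 1%:M 0 (a^-1 *: dlsubmx S) 1%:M *m
                   block_mx a%:M (ursubmx S) 0 schur_compl.
  rewrite mulmx_block !mul1mx !mul0mx !addr0 mul_mx_scalar scalerA mulfV // scale1r.
  by rewrite /schur_compl -scalemxAl addrC subrK -S_block.
by rewrite {1}S_factor det_mulmx det_lblock det_ublock !det1 det_scalar1 !mul1r.
Qed.

End SchurComplement.

Lemma mxtrace_schur_compl_le (R : realFieldType) n (S : 'M[R]_(1 + n)) :
  S^T = S -> 0 < ulsubmx S 0 0 -> \tr (schur_compl S) <= \tr (drsubmx S).
Proof.
move=> S_sym a_gt0; rewrite /schur_compl raddfB /= mxtraceZ gerBl.
have -> : dlsubmx S = (ursubmx S)^T by rewrite trmx_ursub S_sym.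
apply: mulr_ge0; first by rewrite invr_ge0 ltW.
by rewrite mxtrace_mulC mxtrace_mul_tr_ge0.
Qed.

Section PositiveDefinite.
Variable R : realType.

Lemma pd_mx_psd n (M : 'M[R]_n) : pd_mx M -> psd_mx M.
Proof.
case=> M_sym M_pos; split=> // v; have [->|/M_pos/ltW//] := eqVneq v 0.
by rewrite trmx0 !mul0mx mxE.
Qed.

Lemma pd_mx_unit n (M : 'M[R]_n) : pd_mx M -> M \in unitmx.
Proof.
case=> _ M_pos; rewrite unitmxE unitfE; apply/negP => /det0P[w w_neq0 wM].
have := M_pos w^T; rewrite trmx_eq0 => /(_ w_neq0).
by rewrite trmxK wM mul0mx mxE ltxx.
Qed.

Lemma diag_mx_pd n (d : 'rV[R]_n) : (forall j, 0 < d 0 j) -> pd_mx (diag_mx d).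
Proof.
by move=> d_gt0; split=> [|v]; rewrite ?tr_diag_mx // => /qform_diag_gt0; apply.
Qed.

Lemma pd_mx_diag_gt0 n (S : 'M[R]_n) i : pd_mx S -> 0 < S i i.
Proof.
case=> _ S_pos; rewrite -qform_delta; apply: S_pos.
by apply/eqP => /matrixP /(_ i 0); rewrite !mxE !eqxx; apply/eqP/oner_neq0.
Qed.

Lemma pd_mx_congr n m (S : 'M[R]_n) (E : 'M[R]_(n, m)) :
  pd_mx S -> (forall w : 'cV[R]_m, w != 0 -> E *m w != 0) -> pd_mx (E^T *m S *m E).
Proof.
case=> S_sym S_pos E_inj; split; first by rewrite !trmx_mul trmxK S_sym mulmxA.
by move=> w /E_inj/S_pos; rewrite trmx_mul !mulmxA.
Qed.

Lemma pd_mx_ulsub_gt0 n (S : 'M[R]_(1 + n)) : pd_mx S -> 0 < ulsubmx S 0 0.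
Proof. by rewrite !mxE; apply: pd_mx_diag_gt0. Qed.

Lemma pd_mx_schur_compl n (S : 'M[R]_(1 + n)) : pd_mx S -> pd_mx (schur_compl S).
Proof.
move=> S_pd; rewrite schur_compl_congr ?gt_eqF ?pd_mx_ulsub_gt0 //.
apply: pd_mx_congr => // w; apply: contra => /eqP /(congr1 dsubmx).
by rewrite mul_col_mx col_mxKd mul1mx linear0 => ->.
Qed.

Lemma pd_mx_det_gt0 n (S : 'M[R]_n) : pd_mx S -> 0 < \det S.
Proof.
elim: n S => [|n IH] S S_pd; first by rewrite det_mx00.
change 'M[R]_(1 + n) in S.
have a_gt0 := pd_mx_ulsub_gt0 S_pd.
by rewrite det_schur_compl ?gt_eqF // mulr_gt0 // (IH _ (pd_mx_schur_compl S_pd)).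
Qed.

Lemma ln_det_le_mxtrace n (S : 'M[R]_n) : pd_mx S -> ln (\det S) <= \tr S - n%:R.
Proof.
elim: n S => [|n IH] S S_pd; first by rewrite det_mx00 ln1 /mxtrace big_ord0 subrr.
change 'M[R]_(1 + n) in S.
have a_gt0 := pd_mx_ulsub_gt0 S_pd.
have S'_pd := pd_mx_schur_compl S_pd.
have tr_S : \tr S = ulsubmx S 0 0 + \tr (drsubmx S).
  by rewrite -{1}(submxK S) mxtrace_block trace_mx11.
have ln_a : ln (ulsubmx S 0 0) <= ulsubmx S 0 0 - 1.
  by have := @le_ln1Dx R (ulsubmx S 0 0 - 1); rewrite addrCA subrr addr0; apply; lra.
have := IH _ S'_pd; have := mxtrace_schur_compl_le S_pd.1 a_gt0.
rewrite det_schur_compl ?gt_eqF // lnM ?posrE ?pd_mx_det_gt0 // tr_S -natr1.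
lra.
Qed.

End PositiveDefinite.

Definition joseph_form {R : comPzRingType} {n} (C S V X : 'M[R]_n) : 'M[R]_n :=
  (1%:M - X *m C) *m S *m (1%:M - X *m C)^T + X *m V *m X^T.

Section JosephForm.
Variables (R : comPzRingType) (n : nat) (C S V : 'M[R]_n).
Local Notation M := (C *m S *m C^T + V).

Lemma joseph_formE X :
  joseph_form C S V X = S + (X *m M *m X^T - X *m C *m S - S *m C^T *m X^T).
Proof.
rewrite /joseph_form linearB /= trmx1 trmx_mul mulmxBl mul1mx !mulmxBr !mulmx1 !mulmxBl.
rewrite mulmxDr mulmxDl !mulmxA opprB -!addrA; congr (_ + _).
by rewrite addrCA; congr (_ + _); rewrite addrA addrC.
Qed.

Lemma joseph_form_split K X :
  K *m M = S *m C^T -> M *m K^T = C *m S ->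
  joseph_form C S V X = S - K *m C *m S + (X - K) *m M *m (X - K)^T.
Proof.
move=> KM MK; rewrite joseph_formE linearB /= !mulmxBr !mulmxBl.
rewrite -[X *m M *m K^T]mulmxA -[K *m M *m K^T]mulmxA MK KM !mulmxA.
by rewrite opprB addrACA addKr (addrAC (X *m M *m X^T)) addrA.
Qed.

End JosephForm.

Lemma joseph_form_linv (R : comPzRingType) n (C S V X : 'M[R]_n) :
  X *m C = 1%:M -> joseph_form C S V X = X *m V *m X^T.
Proof. by move=> XC; rewrite /joseph_form XC subrr !mul0mx add0r. Qed.

Lemma joseph_form_diag_inv (R : fieldType) n (c d : 'rV[R]_n) (S : 'M[R]_n) :
  (forall j, c 0 j != 0) ->
  joseph_form (diag_mx c) S (diag_mx d) (diag_mx (\row_j (c 0 j)^-1))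
  = diag_mx (\row_j (d 0 j / c 0 j ^+ 2)).
Proof.
move=> c_neq0; rewrite joseph_form_linv ?tr_diag_mx !mulmx_diag.
  by congr diag_mx; apply/rowP => j; rewrite !mxE mulrAC mulrC -expr2 exprVn.
by apply/matrixP => i j; rewrite !mxE mulVf.
Qed.

Section KalmanGain.
Variables (R : realType) (n : nat) (C S V : 'M[R]_n).

Definition innov_cov : 'M[R]_n := C *m S *m C^T + V.
Definition kalman_gain : 'M[R]_n := S *m C^T *m invmx innov_cov.
Definition posterior_cov : 'M[R]_n := S - kalman_gain *m C *m S.

Lemma dare_posterior_cov A W : dare A W C V S -> S = A *m posterior_cov *m A^T + W.
Proof.
move=> S_eq; rewrite {1}S_eq /posterior_cov /kalman_gain /innov_cov.
by rewrite mulmxBr mulmxBl !mulmxA.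
Qed.

Lemma dare_mxtrace_le A W s :
  dare A W C V S -> (forall v, qform posterior_cov v <= qform s%:M v) ->
  \tr S <= \tr (A^T *m A) * s + \tr W.
Proof.
move=> /dare_posterior_cov S_eq P_le; rewrite {1}S_eq raddfD /= lerD2r.
apply: le_trans (mxtrace_congr_le A P_le) _.
by rewrite mul_mx_scalar -scalemxAl mxtraceZ mxtrace_mulC mulrC.
Qed.

Hypotheses (S_psd : psd_mx S) (V_pd : pd_mx V).

Lemma innov_cov_pd : pd_mx innov_cov.
Proof.
case: S_psd => S_sym S_ge0; case: V_pd => V_sym V_gt0; split.
  by rewrite /innov_cov linearD /= !trmx_mul trmxK S_sym V_sym mulmxA.
move=> v /V_gt0 V_v; rewrite -[X in 0 < X]/(qform innov_cov v) qformD qform_congr.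
by rewrite ltr_wpDl ?S_ge0.
Qed.

Lemma kalman_gain_innov : kalman_gain *m innov_cov = S *m C^T.
Proof. by rewrite -mulmxA mulVmx ?mulmx1 //; apply/pd_mx_unit/innov_cov_pd. Qed.

Lemma innov_kalman_gain : innov_cov *m kalman_gain^T = C *m S.
Proof.
have [innov_sym _] := innov_cov_pd.
rewrite !trmx_mul trmx_inv innov_sym trmxK S_psd.1 !mulmxA.
by rewrite mulmxV ?mul1mx //; apply/pd_mx_unit/innov_cov_pd.
Qed.

Lemma joseph_form_kalman X :
  joseph_form C S V X
  = posterior_cov + (X - kalman_gain) *m innov_cov *m (X - kalman_gain)^T.
Proof. exact: joseph_form_split kalman_gain_innov innov_kalman_gain. Qed.

Lemma posterior_cov_ge0 v : 0 <= qform posterior_cov v.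
Proof.
have := joseph_form_kalman kalman_gain; rewrite subrr !mul0mx addr0 => <-.
by rewrite qformD !qform_congr addr_ge0 ?S_psd.2 ?(pd_mx_psd V_pd).2.
Qed.

Lemma posterior_cov_le_joseph X v :
  qform posterior_cov v <= qform (joseph_form C S V X) v.
Proof.
rewrite joseph_form_kalman [X in _ <= X]qformD qform_congr lerDl.
exact: (pd_mx_psd innov_cov_pd).2.
Qed.

Lemma dare_pd A W : pd_mx W -> dare A W C V S -> pd_mx S.
Proof.
move=> [_ W_pos] /dare_posterior_cov S_eq; split=> [|v /W_pos W_v]; first exact: S_psd.1.
rewrite -[X in 0 < X]/(qform S v) {1}S_eq qformD qform_congr.
by rewrite ltr_wpDl ?posterior_cov_ge0.
Qed.

End KalmanGain.

Unset Implicit Arguments.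

Theorem theorem4 (R : realType) (n : nat) (A W C Sigma : 'M[R]_n)
    (sigma : 'I_n -> R) (l : 'I_n) :
  pd_mx W ->
  is_diag_mx C -> (forall i, 0 < C i i) ->
  (forall j, 0 < sigma j) ->
  let V := diag_mx (\row_j (sigma j ^+ 2)) in
  psd_mx Sigma -> dare A W C V Sigma ->
  (forall S, psd_mx S -> dare A W C V S -> S = Sigma) ->
  (forall j, C l l ^+ 2 / sigma l ^+ 2 <= C j j ^+ 2 / sigma j ^+ 2) ->
  ln (\det Sigma) <= \tr (A^T *m A) * (sigma l ^+ 2 / C l l ^+ 2) + \tr W.
Proof.
move=> W_pd /diag_mxP[c C_eq] C_gt0 sigma_gt0 V Sigma_psd Sigma_dare _ l_min.
have C_entry j : C j j = c 0 j by rewrite C_eq mxE eqxx mulr1n.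
have V_pd : pd_mx V by apply: diag_mx_pd => j; rewrite mxE exprn_gt0.
have ratio_le j : sigma j ^+ 2 / c 0 j ^+ 2 <= sigma l ^+ 2 / C l l ^+ 2.
  rewrite -C_entry -invf_div -[X in _ <= X]invf_div.
  by rewrite lef_pV2 ?posrE ?divr_gt0 ?exprn_gt0 ?l_min.
have P_le v : qform (posterior_cov C Sigma V) v
              <= qform (sigma l ^+ 2 / C l l ^+ 2)%:M v.
  pose C_inv := diag_mx (\row_j (c 0 j)^-1).
  apply: le_trans (posterior_cov_le_joseph C Sigma_psd V_pd C_inv v) _.
  rewrite {1}C_eq joseph_form_diag_inv => [|j]; last by rewrite -C_entry gt_eqF.
  by rewrite -diag_const_mx; apply: qform_diag_le => j; rewrite !mxE ratio_le.
have Sigma_pd : pd_mx Sigma := dare_pd Sigma_psd V_pd W_pd Sigma_dare.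
have := ln_det_le_mxtrace Sigma_pd; have := dare_mxtrace_le Sigma_dare P_le.
have := ler0n R n; lra.
Qed.
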